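(* Let $\mathcal{R}$ be a ring and $(\mathcal{C}^{\bullet},\partial)$ a bigraded cochain complex of $\mathcal{R}$-modules as in the context. For each $p,q\in\mathbb{Z}$ with $p+q=k$ there is a commutative diagram with exact rows and exact columns whose rows are \[ 0\to\mathcal{B}^{k}_{q}\cap\mathcal{C}^{p,q}\hookrightarrow\mathcal{B}^{k}_{q}\xrightarrow{\pi_{q+1}}\mathcal{B}^{k}_{q+1}\to0, \qquad 0\to\mathcal{Z}^{k}_{q}\cap\mathcal{C}^{p,q}\hookrightarrow\mathcal{Z}^{k}_{q}\xrightarrow{\pi_{q+1}}\mathcal{Z}^{k}_{q+1}\to0, \] \[ 0\to\frac{\mathcal{Z}^{k}_{q}\cap\mathcal{C}^{p,q}}{\mathcal{B}^{k}_{q}\cap\mathcal{C}^{p,q}}\to\frac{\mathcal{Z}^{k}_{q}}{\mathcal{B}^{k}_{q}}\xrightarrow{\bar\pi_{q+1}}\frac{\mathcal{Z}^{k}_{q+1}}{\mathcal{B}^{k}_{q+1}}\to0, \] (listed top, middle, bottom), where the vertical maps from the top to the middle row are inclusions, those from the middle to the bottom row are the canonical projections, and the bottom row maps are induced. (Here $\mathcal{Z}^{k}_{0}=Z^{k}(\mathcal{C},\partial)$ and $\mathcal{B}^{k}_{0}=B^{k}(\mathcal{C},\partial)$.)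
   Context: Setting: $\mathcal{C}^{k}=\bigoplus_{p+q=k}\mathcal{C}^{p,q}$ with $\mathcal{C}^{p,q}=\{0\}$ if $p<0$ or $q<0$; $\partial$ is $\mathcal{R}$-linear of degree $1$, $\partial^{2}=0$, $\partial=\partial_{2,-1}+\partial_{1,0}+\partial_{0,1}$ with $\partial_{i,j}(\mathcal{C}^{p,q})\subseteq\mathcal{C}^{p+i,q+j}$. $G^{q}\mathcal{C}:=\bigoplus_{j\geq q}\mathcal{C}^{i,j}$ and $\pi_{q}:\mathcal{C}\to G^{q}\mathcal{C}$ is the projection along the bigrading. $\mathcal{N}^{p,q}:=\ker(\partial_{0,1}|_{\mathcal{C}^{p,q}})\cap\ker(\partial_{2,-1}|_{\mathcal{C}^{p,q}})$, $\mathcal{N}_{q}:=\bigoplus_{p}\mathcal{N}^{p-q,q}$ (degree-$m$ part $\mathcal{N}^{m-q,q}$), a subcomplex of $(\mathcal{C},\partial)$ with differential $\overline{\partial}:=\partial|_{\mathcal{N}_q}$. For $\eta\in\mathcal{C}^k$, $(\partial\eta)_{i,j}$ is the $\mathcal{C}^{i,j}$-component of $\partial\eta$. $\mathcal{M}^{k}:=\{\eta\in\mathcal{C}^{k}\mid(\partial\eta)_{i,j}\in B^{k+1}(\mathcal{N}_{j},\overline{\partial})\ \forall\, i+j=k+1\}$; $\mathcal{Z}^{k}_{q}:=\{\pi_{q}(\eta)\mid\eta\in\mathcal{M}^{k},\ \pi_{q}(\partial\eta)=0\}$; $\mathcal{B}^{k}_{q}:=\pi_{q}(B^{k}(\mathcal{C},\partial))$.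 *)

From HB Require Import structures.
From mathcomp Require Import all_boot all_order all_algebra.
Set Implicit Arguments. Unset Strict Implicit. Unset Printing Implicit Defensive.
Import Order.TTheory GRing.Theory Num.Theory.
Local Open Scope ring_scope.

(* A bigraded cochain complex of R-modules, encoded on the total module
   C = (+)_k C^k = (+)_{p,q} C^{p,q} by the family of projections
   e p q : C -> C onto the summand C^{p,q} (complete family of orthogonal
   idempotents, finite support), and the differential d = \partial. *)
Record bigraded_complex (R : pzRingType) (C : lmodType R)
    (e : int -> int -> {linear C -> C}) (d : {linear C -> C}) : Prop := {
  bc_orth : forall p q p' q' (x : C),
      e p q (e p' q' x) = if (p == p') && (q == q') then e p q x else 0;
  bc_neg : forall p q (x : C), (p < 0) || (q < 0) -> e p q x = 0;
  bc_fin : forall x : C, exists s : seq (int * int),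
      x = \sum_(pq <- s) e pq.1 pq.2 x;
  bc_dd : forall x : C, d (d x) = 0;
  (* d = d_{2,-1} + d_{1,0} + d_{0,1}, d_{i,j}(C^{p,q}) \subseteq C^{p+i,q+j} *)
  bc_bideg : forall p q p' q' (x : C),
      ~~ [|| (p' == p + 2) && (q' == q - 1),
             (p' == p + 1) && (q' == q) |
             (p' == p) && (q' == q + 1)] ->
      e p' q' (d (e p q x)) = 0
}.

Section Defs.
Variables (R : pzRingType) (C : lmodType R).
Variables (e : int -> int -> {linear C -> C}) (d : {linear C -> C}).

Definition Cpq (p q : int) (x : C) : Prop := e p q x = x.

Definition Ck (k : int) (x : C) : Prop :=
  forall p q : int, p + q != k -> e p q x = 0.

(* pi_q : C -> G^q C, on elements of total degree k (the only ones it is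
   applied to): sum of the components in C^{k-j,j}, j >= q. *)
Definition pik (k q : int) (x : C) : C :=
  \sum_(0 <= j < (absz k).+1 | q <= j%:Z) e (k - j%:Z) j%:Z x.

(* N^{p,q} = ker d_{0,1} \cap ker d_{2,-1} on C^{p,q} *)
Definition Npq (p q : int) (x : C) : Prop :=
  Cpq p q x /\ e p (q + 1) (d x) = 0 /\ e (p + 2) (q - 1) (d x) = 0.

(* y \in B^{k+1}(N_j, dbar) : image of the degree-k part N^{k-j,j} *)
Definition BN (k j : int) (y : C) : Prop :=
  exists x, Npq (k - j) j x /\ y = d x.

Definition Mk (k : int) (eta : C) : Prop :=
  Ck k eta /\ forall i j : int, i + j = k + 1 -> BN k j (e i j (d eta)).

Definition Zk (k q : int) (z : C) : Prop :=
  exists eta, Mk k eta /\ pik (k + 1) q (d eta) = 0 /\ z = pik k q eta.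

Definition Bk (k q : int) (b : C) : Prop :=
  exists y, Ck (k - 1) y /\ b = pik k q (d y).

Definition submod (P : C -> Prop) : Prop :=
  [/\ P 0, (forall x y, P x -> P y -> P (x + y)) &
      (forall (a : R) x, P x -> P (a *: x))].

Definition short_exact_incl (K A B : C -> Prop) (f : C -> C) : Prop :=
  [/\ (forall x, K x -> A x),
      (forall x, A x -> B (f x)),
      (forall y, B y -> exists x, A x /\ f x = y) &
      (forall x, A x -> (f x = 0 <-> K x))].

(* 0 -> K/K' --incl--> A/A' --fbar--> B/B' -> 0 exact, with the maps
   induced by the inclusion K -> A and by f; written out elementwise
   (including well-definedness of the induced maps). *)
Definition short_exact_quot (K K' A A' B B' : C -> Prop) (f : C -> C) : Prop :=
  [/\ (forall x, K' x -> A' x) /\ (forall x, A' x -> B' (f x)),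
      (forall x, K x -> A' x -> K' x),
      (forall x, K x -> B' (f x)),
      (forall x, A x -> B' (f x) -> exists y, K y /\ A' (x - y)) &
      (forall w, B w -> exists x, A x /\ B' (f x - w))].

End Defs.

(* Elements of B^k_q and Z^k_q are fixed by pi_q, and pi_q = e_{p,q} + pi_{q+1}
   on degree k, so pi_{q+1} kills exactly their C^{p,q}-component.  Lifting
   along pi_{q+1} is immediate for B; for Z, if eta in M^k represents an element
   of Z^k_{q+1}, the C^{p+1,q}-component of d eta is d x0 with x0 in N^{p,q},
   and eta - x0 represents a lift in Z^k_q.  The bottom row then follows from
   the two rows above it by a diagram chase. *)

From HB Require Import structures.
From mathcomp Require Import all_boot all_order all_algebra.
From mathcomp Require Import zify.
Set Implicit Arguments. Unset Strict Implicit. Unset Printing Implicit Defensive.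
Import Order.TTheory GRing.Theory Num.Theory.
Local Open Scope ring_scope.

Section Submodules.
Variables (R : pzRingType) (C : lmodType R).

Lemma submod_ker (f : {linear C -> C}) : submod (fun x => f x = 0).
Proof.
split; first exact: linear0.
  by move=> x y fx fy; rewrite linearD fx fy addr0.
by move=> a x fx; rewrite linearZ_LR fx scaler0.
Qed.

Lemma submodI (P Q : C -> Prop) :
  submod P -> submod Q -> submod (fun x => P x /\ Q x).
Proof.
move=> [P0 PD PZ] [Q0 QD QZ]; split=> //.
  by move=> x y [Px Qx] [Py Qy]; split; [apply: PD | apply: QD].
by move=> a x [Px Qx]; split; [apply: PZ | apply: QZ].
Qed.

Lemma submod_forall (I : Type) (P : I -> C -> Prop) :
  (forall i, submod (P i)) -> submod (fun x => forall i, P i x).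
Proof.
move=> sP; split=> [i | x y Px Py i | a x Px i]; have [P0 PD PZ] := sP i.
- exact: P0.
- exact: PD.
- exact: PZ.
Qed.

Lemma submod_preimage (f : {linear C -> C}) (P : C -> Prop) :
  submod P -> submod (fun x => P (f x)).
Proof.
move=> [P0 PD PZ]; split=> [|x y Px Py|a x Px]; first by rewrite linear0.
  by rewrite linearD; apply: PD.
by rewrite linearZ_LR; apply: PZ.
Qed.

Lemma submod_image (f : {linear C -> C}) (P : C -> Prop) :
  submod P -> submod (fun y => exists x, P x /\ y = f x).
Proof.
move=> [P0 PD PZ]; split.
- by exists 0; rewrite linear0.
- move=> _ _ [x [Px ->]] [y [Py ->]].
  by exists (x + y); rewrite linearD; split; first exact: PD.
- move=> a _ [x [Px ->]].
  by exists (a *: x); rewrite linearZ_LR; split; first exact: PZ.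
Qed.

Lemma submod_ext (P Q : C -> Prop) :
  (forall x, P x <-> Q x) -> submod P -> submod Q.
Proof.
move=> PQ [P0 PD PZ]; split=> [|x y|a x]; rewrite -!PQ //; first exact: PD.
exact: PZ.
Qed.

Lemma short_exact_quot_of_incl (K K' A A' B B' : C -> Prop) (f : C -> C) :
  short_exact_incl K' A' B' f -> short_exact_incl K A B f ->
  (forall x, A' x -> A x) -> submod A -> submod B' ->
  {morph f : x y / x - y} ->
  short_exact_quot K K' A A' B B' f.
Proof.
move=> [K'A' A'B' B'lift kerA'] [KA AB Blift kerA] A'A [_ AD AZ] [B'0 _ _] fB.
have fK x : K x -> f x = 0 by move=> Kx; apply/(kerA _ (KA _ Kx)).
split=> //.
- by move=> x Kx A'x; apply/(kerA' _ A'x)/fK.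
- by move=> x /fK ->.
- move=> x Ax /B'lift [y [A'y fy]]; exists (x - y); split.
    have Axy : A (x - y) by apply: AD; rewrite // -scaleN1r; apply/AZ/A'A.
    by apply/(kerA _ Axy); rewrite fB fy subrr.
  by rewrite opprB addrC subrK.
- by move=> w /Blift [x [Ax <-]]; exists x; rewrite subrr.
Qed.

End Submodules.

Lemma pik_is_linear (R : pzRingType) (C : lmodType R)
    (e : int -> int -> {linear C -> C}) (m q : int) : linear (pik e m q).
Proof.
move=> a x y; rewrite /pik scaler_sumr -big_split.
by apply: eq_bigr => j _; rewrite linearP.
Qed.

HB.instance Definition _ (R : pzRingType) (C : lmodType R)
    (e : int -> int -> {linear C -> C}) (m q : int) :=
  GRing.isLinear.Build R C C *:%R (pik e m q) (pik_is_linear e m q).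

Section BigradedComplex.
Variables (R : pzRingType) (C : lmodType R).
Variables (e : int -> int -> {linear C -> C}) (d : {linear C -> C}).
Hypothesis Hc : bigraded_complex e d.

Lemma eq_from_components (x y : C) : (forall a b, e a b x = e a b y) -> x = y.
Proof.
move=> exy; have [s xy] := bc_fin Hc (x - y).
apply/eqP; rewrite -subr_eq0 xy; apply/eqP/big1 => pq _.
by rewrite linearB /= exy subrr.
Qed.

Lemma component_pik (m q a b : int) (z : C) :
  e a b (pik e m q z) = if (a + b == m) && (q <= b) then e a b z else 0.
Proof.
rewrite /pik linear_sum /=.
under eq_bigr => j _ do rewrite (bc_orth Hc).
case: ifP => [/andP[/eqP abm qb] | abq]; last first.
  by apply: big1 => j qj; case: ifP => // /andP[/eqP aj /eqP bj]; move: abq qj; lia.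
(* The sum defining pik stops at j = |m|, but beyond it a = m - b < 0. *)
have [b_out | b_in] := boolP ((b < 0) || ((absz m)%:Z < b)).
  rewrite (bc_neg Hc) ?big1 // => [j _|]; first by case: ifP => // /andP[_ /eqP]; lia.
  by move: b_out; lia.
have [n bn] : exists n : nat, b = n%:Z by exists (absz b); move: b_in; lia.
subst b.
have n_in : n \in index_iota 0 (absz m).+1 by rewrite mem_index_iota; move: b_in; lia.
rewrite big_mkcond (bigD1_seq n n_in (iota_uniq _ _)) /= qb.
have -> : (a == m - n%:Z) && (n%:Z == n%:Z :> int) by apply/andP; split=> //; lia.
rewrite big1 ?addr0 // => j jn; case: ifP => // _.
by case: ifP => // /andP[_ /eqP]; move: jn; lia.
Qed.

Lemma pik_split (p q m : int) (z : C) : p + q = m ->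
  pik e m q z = e p q z + pik e m (q + 1) z.
Proof.
move=> pqm; apply: eq_from_components => a b.
rewrite linearD !component_pik (bc_orth Hc).
have [-> | bq] := eqVneq b q.
  have -> : (a + q == m) = (a == p) by apply/eqP/eqP; lia.
  have -> : (q + 1 <= q) = false by lia.
  by rewrite lexx !andbT andbF addr0.
rewrite andbF add0r.
by have -> : (q + 1 <= b) = (q <= b) by apply/idP/idP; move: bq; lia.
Qed.

Lemma pik_pik (m q q' : int) (z : C) : q <= q' ->
  pik e m q' (pik e m q z) = pik e m q' z.
Proof.
move=> qq'; apply: eq_from_components => a b; rewrite !component_pik.
by case: ifP => // /andP[-> q'b]; rewrite (le_trans qq' q'b).
Qed.

Lemma pik_succ_Cpq (p q m : int) (x : C) :
  Cpq e p q x -> pik e m (q + 1) x = 0.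
Proof.
move=> Cx; apply: eq_from_components => a b.
rewrite component_pik -Cx (bc_orth Hc) linear0.
have [-> | _] := eqVneq b q; last by rewrite andbF !if_same.
have -> : (q + 1 <= q) = false by lia.
by rewrite andbF.
Qed.

Lemma pik_succ_eq0 (p q m : int) (x : C) : p + q = m -> pik e m q x = x ->
  pik e m (q + 1) x = 0 <-> Cpq e p q x.
Proof.
move=> pqm xq; split; last exact: pik_succ_Cpq.
by move=> x0; have := pik_split x pqm; rewrite x0 addr0 xq => /esym.
Qed.

Lemma Cpq_Ck (p q : int) (x : C) : Cpq e p q x -> Ck e (p + q) x.
Proof.
move=> Cx a b ab; rewrite -Cx (bc_orth Hc).
by case: ifP => // /andP[/eqP ap /eqP bq]; rewrite ap bq eqxx in ab.
Qed.

Lemma d_Ck (k : int) (y : C) : Ck e (k - 1) y -> Ck e k (d y).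
Proof.
move=> Cy a b ab; have [s ->] := bc_fin Hc y.
rewrite !linear_sum big1 //= => pq _.
have [pqk | pqk] := eqVneq (pq.1 + pq.2) (k - 1); last by rewrite Cy // !linear0.
by rewrite (bc_bideg Hc) //; move: pqk ab; lia.
Qed.

(* N^{p,q} is killed by d_{0,1} and d_{2,-1}, so only d_{1,0} survives. *)
Lemma Npq_d (p q : int) (x : C) : Npq e d p q x -> Cpq e (p + 1) q (d x).
Proof.
move=> [Cx [d01 d21]]; apply/esym/eq_from_components => a b; rewrite (bc_orth Hc).
case: ifP => [/andP[/eqP -> /eqP ->] // | not_10].
have [/andP[/eqP -> /eqP ->] // | not_01] := boolP ((a == p) && (b == q + 1)).
have [/andP[/eqP -> /eqP ->] // | not_21] := boolP ((a == p + 2) && (b == q - 1)).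
by rewrite -Cx (bc_bideg Hc) //; move: not_10 not_01 not_21; lia.
Qed.

Lemma submod_Cpq (p q : int) : submod (Cpq e p q).
Proof.
rewrite /Cpq; split=> [|x y Cx Cy|a x Cx]; first exact: linear0.
  by rewrite linearD Cx Cy.
by rewrite linearZ_LR Cx.
Qed.

Lemma submod_Ck (k : int) : submod (Ck e k).
Proof.
apply: submod_forall => a; apply: submod_forall => b; apply: submod_forall => _.
exact: submod_ker.
Qed.

Lemma submod_Npq (p q : int) : submod (Npq e d p q).
Proof.
apply: submodI; first exact: submod_Cpq.
by apply: submodI; apply: (submod_preimage d (submod_ker _)).
Qed.

Lemma submod_BN (k j : int) : submod (BN e d k j).
Proof. exact: (submod_image d (submod_Npq _ _)). Qed.

Lemma submod_Mk (k : int) : submod (Mk e d k).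
Proof.
apply: submodI; first exact: submod_Ck.
apply: submod_forall => i; apply: submod_forall => j; apply: submod_forall => _.
exact: (submod_preimage (e i j \o d) (submod_BN k j)).
Qed.

Lemma submod_Bk (k q : int) : submod (Bk e d k q).
Proof. exact: (submod_image (pik e k q \o d) (submod_Ck (k - 1))). Qed.

Lemma submod_Zk (k q : int) : submod (Zk e d k q).
Proof.
apply: (submod_ext _ (submod_image (pik e k q)
  (submodI (submod_Mk k) (submod_preimage d (submod_ker (pik e (k + 1) q)))))).
by move=> z; split=> [[eta [[M0 d0] ->]] | [eta [M0 [d0 ->]]]]; exists eta.
Qed.

Lemma Bk_Zk (k q : int) (x : C) : Bk e d k q x -> Zk e d k q x.
Proof.
move=> [y [Cy ->]]; exists (d y); rewrite (bc_dd Hc) linear0; split=> //.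
split=> [|i j _]; first exact: d_Ck.
by rewrite (bc_dd Hc) linear0; case: (submod_BN k j).
Qed.

Lemma Bk_pik (k q : int) (x : C) : Bk e d k q x -> pik e k q x = x.
Proof. by move=> [y [_ ->]]; rewrite pik_pik. Qed.

Lemma Zk_pik (k q : int) (x : C) : Zk e d k q x -> pik e k q x = x.
Proof. by move=> [eta [_ [_ ->]]]; rewrite pik_pik. Qed.

Lemma Bk_pik_succ (k q : int) (x : C) :
  Bk e d k q x -> Bk e d k (q + 1) (pik e k (q + 1) x).
Proof. by move=> [y [Cy ->]]; exists y; rewrite pik_pik ?lerDl. Qed.

Lemma Zk_pik_succ (k q : int) (x : C) :
  Zk e d k q x -> Zk e d k (q + 1) (pik e k (q + 1) x).
Proof.
move=> [eta [Meta [deta ->]]]; exists eta; rewrite pik_pik ?lerDl //.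
by rewrite -(@pik_pik _ q) ?lerDl // deta linear0.
Qed.

Lemma Bk_succ_lift (k q : int) (y : C) : Bk e d k (q + 1) y ->
  exists x, Bk e d k q x /\ pik e k (q + 1) x = y.
Proof.
move=> [w [Cw ->]]; exists (pik e k q (d w)).
by split; [exists w | rewrite pik_pik ?lerDl].
Qed.

Lemma Mk_sub_Npq (k q : int) (eta x0 : C) :
  Mk e d k eta -> Npq e d (k - q) q x0 -> e (k - q + 1) q (d eta) = d x0 ->
  Mk e d k (eta - x0).
Proof.
move=> [Ceta BNeta] Nx0 eta_x0; have Cdx0 := Npq_d Nx0.
split.
  have [_ CD CZ] := submod_Ck k; apply: CD => //; rewrite -scaleN1r; apply: CZ.
  by have := Cpq_Ck Nx0.1; rewrite subrK.
move=> i j ij; rewrite !linearB /=.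
have [/andP[/eqP -> /eqP ->] | other] := boolP ((i == k - q + 1) && (j == q)).
  by rewrite eta_x0 Cdx0 subrr; case: (submod_BN k q).
by rewrite -Cdx0 (bc_orth Hc) (negbTE other) subr0; apply: BNeta.
Qed.

Lemma Zk_succ_lift (k q : int) (y : C) : Zk e d k (q + 1) y ->
  exists x, Zk e d k q x /\ pik e k (q + 1) x = y.
Proof.
move=> [eta [Meta [deta ->]]].
have ij : k - q + 1 + q = k + 1 by lia.
have [x0 [Nx0 eta_x0]] := Meta.2 _ _ ij.
have Cdx0 := Npq_d Nx0.
exists (pik e k q (eta - x0)); split.
  exists (eta - x0); split; first exact: Mk_sub_Npq Meta Nx0 eta_x0.
  rewrite (pik_split _ ij) !linearB /= eta_x0 Cdx0 subrr add0r deta.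
  by rewrite (pik_succ_Cpq _ Cdx0) subrr.
by rewrite pik_pik ?lerDl // linearB /= (pik_succ_Cpq _ Nx0.1) subr0.
Qed.

Lemma short_exact_pik_succ (p q k : int) (A A1 : C -> Prop) : p + q = k ->
  (forall x, A x -> pik e k q x = x) ->
  (forall x, A x -> A1 (pik e k (q + 1) x)) ->
  (forall y, A1 y -> exists x, A x /\ pik e k (q + 1) x = y) ->
  short_exact_incl (fun x => A x /\ Cpq e p q x) A A1 (pik e k (q + 1)).
Proof.
move=> pqk Afix AA1 A1lift; split=> [x [] // | // | // | x Ax].
have ker := pik_succ_eq0 pqk (Afix _ Ax).
by split=> [/ker | [_ /ker]].
Qed.

End BigradedComplex.

Theorem theorem3p3 (R : pzRingType) (C : lmodType R)
    (e : int -> int -> {linear C -> C}) (d : {linear C -> C})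
    (Hc : bigraded_complex e d) (p q k : int) (hk : p + q = k) :
  let B  := Bk e d k q in
  let B1 := Bk e d k (q + 1) in
  let Z  := Zk e d k q in
  let Z1 := Zk e d k (q + 1) in
  let BC := fun x => B x /\ Cpq e p q x in
  let ZC := fun x => Z x /\ Cpq e p q x in
  let pi1 := pik e k (q + 1) in
  [/\ (* all objects are submodules, so the quotients are modules *)
      [/\ submod B, submod B1, submod Z, submod Z1 & (submod BC /\ submod ZC)],
      (* vertical inclusions top -> middle (columns 0 -> B -> Z -> Z/B -> 0) *)
      [/\ forall x, BC x -> ZC x, forall x, B x -> Z x & forall x, B1 x -> Z1 x],
      (* top row *)
      short_exact_incl BC B B1 pi1,
      (* middle row *)
      short_exact_incl ZC Z Z1 pi1 &
      (* bottom row *)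
      short_exact_quot ZC BC Z B Z1 B1 pi1].
Proof.
move=> B B1 Z Z1 BC ZC pi1.
have BZ := Bk_Zk Hc.
have rowB : short_exact_incl BC B B1 pi1.
  apply: (short_exact_pik_succ Hc hk) => [x | x | y].
  - exact: Bk_pik.
  - exact: Bk_pik_succ.
  - exact: Bk_succ_lift.
have rowZ : short_exact_incl ZC Z Z1 pi1.
  apply: (short_exact_pik_succ Hc hk) => [x | x | y].
  - exact: Zk_pik.
  - exact: Zk_pik_succ.
  - exact: Zk_succ_lift.
have sB := submod_Bk e d k; have sZ := submod_Zk e d k.
split=> //.
- split; [exact: sB | exact: sB | exact: sZ | exact: sZ | split].
    exact: submodI (sB q) (submod_Cpq e p q).
  exact: submodI (sZ q) (submod_Cpq e p q).
- by split=> [x [Bx Cx] | x | x]; [split; first exact: BZ | exact: BZ | exact: BZ].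
- apply: (short_exact_quot_of_incl rowB rowZ (BZ k q) (sZ q) (sB (q + 1))).
  by move=> x y; rewrite /pi1 linearB.
Qed.
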